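(* For any $\delta>0$ and $n\ge\lambda\ge 14\log\frac{4}{\delta}$, the algorithm $C_\lambda$ is $(\varepsilon,\delta)$-differentially private where \[ \varepsilon=\sqrt{\frac{32\log\frac{4}{\delta}}{\lambda-\sqrt{2\lambda\log\frac{2}{\delta}}}}\cdot\left(1-\frac{\lambda-\sqrt{2\lambda\log\frac{2}{\delta}}}{n}\right). \]
   Context: The algorithm $C_\lambda$ on input $(x_1,\dots,x_n)\in\{0,1\}^n$: sample $s\sim\mathrm{Bin}(n,\lambda/n)$; choose $H$ uniformly at random among subsets of $[n]$ of size $s$; output $\sum_{i\notin H}x_i+B$ where $B\sim\mathrm{Bin}(s,1/2)$ is independent. An algorithm $M$ on $\{0,1\}^n$ is $(\varepsilon,\delta)$-differentially private if for all $X,X'$ differing in one coordinate and every set $W$ of outputs, $\Pr[M(X)\in W]\le e^{\varepsilon}\Pr[M(X')\in W]+\delta$. $\log$ is the natural logarithm. *)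

From HB Require Import structures.
From mathcomp Require Import all_boot all_order all_algebra.
From mathcomp Require Import reals.
From mathcomp.analysis Require Import sequences exp.
Set Implicit Arguments. Unset Strict Implicit. Unset Printing Implicit Defensive.
Import Order.TTheory GRing.Theory Num.Theory.
Local Open Scope ring_scope.

Definition binom_pmf (R : realType) (n : nat) (p : R) (s : nat) : R :=
  'C(n, s)%:R * p ^+ s * (1 - p) ^+ (n - s).

(* Pr[C_lambda(X) = k] for X in {0,1}^n:
   s ~ Bin(n, lambda/n); H uniform among the C(n,s) subsets of size s;
   output = #{i notin H | x_i = 1} + B with B ~ Bin(s, 1/2). *)
Definition C_lambda_pmf (R : realType) (n : nat) (lam : R)
    (X : {ffun 'I_n -> bool}) (k : 'I_n.+1) : R :=
  \sum_(s < n.+1) binom_pmf n (lam / n%:R) s *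
    \sum_(H : {set 'I_n} | #|H| == s)
      ('C(n, s)%:R)^-1 *
      \sum_(b < s.+1) binom_pmf s (2^-1) b *
        ((#|[set i in ~: H | X i]| + b == k)%N)%:R.

Definition diff_private (R : realType) (n : nat)
    (M : {ffun 'I_n -> bool} -> 'I_n.+1 -> R) (eps delta : R) : Prop :=
  forall X X' : {ffun 'I_n -> bool},
    #|[set i | X i != X' i]| = 1%N ->
    forall W : {set 'I_n.+1},
      \sum_(k in W) M X k <= expR eps * \sum_(k in W) M X' k + delta.

(* Let X, X' differ at coordinate i and condition on the noise set H outside i,
   of size m.  Given it, the output is A + X_i + Bin(m, 1/2) if i is not in H
   (probability 1 - p, where p = lam/n) and A + Bin(m + 1, 1/2) if it is, A being
   the same for X and X'.  With U and V the laws of 1 + Bin(m, 1/2) and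
   Bin(m, 1/2), the two inputs induce the mixtures (1 - p) U + p (U + V)/2 and
   (1 - p) V + p (U + V)/2, in some order.  Let E be the square-root factor of
   eps and rho = (1 + E/2)^2.  Wherever U <= rho V, the ratio of the mixtures is
   at most (1 + (1 - p) E/2)^2 <= e^((1 - p) E) <= e^eps; the rest of the mass of
   U is a binomial tail, at most e^th c^m by Chernoff's bound, where
   c = (e^th + e^(-rho th))/2.  Averaging over m ~ Bin(n - 1, p) bounds the
   additive error by e^th (1 - p (1 - c))^(n-1) <= e^(th - (lam - p)(1 - c)), and
   a numerically chosen th <= 1/4 with 1 - c >= E^2/32, together with
   lam E^2 >= 32 log(4/delta), makes this at most delta. *)

From HB Require Import structures.
From mathcomp Require Import all_boot all_order all_algebra.
From mathcomp Require Import reals.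
From mathcomp.analysis Require Import sequences exp.
From mathcomp.algebra_tactics Require Import ring lra.
Import Order.TTheory GRing.Theory Num.Theory.
Local Open Scope ring_scope.

Section Privacy.
Set Implicit Arguments.
Unset Strict Implicit.

Variable R : realType.

Definition ones_off n (X : {ffun 'I_n -> bool}) (H : {set 'I_n}) : nat :=
  #|[set i in ~: H | X i]|.

Lemma ones_off_setU1 n (X : {ffun 'I_n -> bool}) (H : {set 'I_n}) i :
  i \notin H -> ones_off X H = (ones_off X (i |: H) + X i)%N.
Proof.
move=> iH; rewrite /ones_off (cardsD1 i) !inE iH addnC; congr (_ + _)%N.
by apply: eq_card => j; rewrite !inE negb_or andbA.
Qed.

Lemma ones_off_eq n (X X' : {ffun 'I_n -> bool}) (H : {set 'I_n}) i :
  (forall j, j != i -> X j = X' j) -> ones_off X (i |: H) = ones_off X' (i |: H).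
Proof.
move=> agree; apply: eq_card => j; rewrite !inE.
by have [->|/agree ->] := eqVneq j i; rewrite ?eqxx.
Qed.

Lemma neighbour_flip n (X X' : {ffun 'I_n -> bool}) :
  #|[set i | X i != X' i]| = 1%N ->
  exists2 i, (forall j, j != i -> X j = X' j) & X' i = ~~ X i.
Proof.
move=> /eqP/cards1P[i diff]; exists i => [j ji|].
  by apply/eqP; apply: contraNT ji => neq; rewrite -in_set1 -diff inE.
have : i \in [set i | X i != X' i] by rewrite diff set11.
by rewrite inE; case: (X i); case: (X' i).
Qed.

(** * The binomial distribution with parameter 1/2 *)

Definition fair_binom m j : R := 'C(m, j)%:R / 2 ^+ m.

Definition fair_binom_shift (x : bool) m j : R :=
  if (x <= j)%N then fair_binom m (j - x) else 0.

Lemma fair_binom_ge0 m j : 0 <= fair_binom m j.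
Proof. by rewrite divr_ge0 // exprn_ge0. Qed.

Lemma fair_binom_shift_ge0 x m j : 0 <= fair_binom_shift x m j.
Proof. by rewrite /fair_binom_shift; case: ifP => // _; exact: fair_binom_ge0. Qed.

Lemma fair_binom_small m j : (m < j)%N -> fair_binom m j = 0.
Proof. by move=> lt_mj; rewrite /fair_binom bin_small // mul0r. Qed.

Lemma fair_binom_shift_false m j : fair_binom_shift false m j = fair_binom m j.
Proof. by rewrite /fair_binom_shift subn0. Qed.

Lemma fair_binom_shift_true m j :
  fair_binom_shift true m j = if j is j'.+1 then fair_binom m j' else 0.
Proof. by case: j => [|j]; rewrite /fair_binom_shift //= subn1. Qed.

Lemma binom_pmf_half m j : binom_pmf m (2^-1 : R) j = fair_binom m j.
Proof.
rewrite /binom_pmf /fair_binom.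
have [le_jm|lt_mj] := leqP j m; last by rewrite bin_small // !mul0r.
have -> : (1 - 2^-1 : R) = 2^-1 by field.
by rewrite -mulrA -exprD subnKC // exprVn.
Qed.

Lemma fair_binomS x m j :
  fair_binom m.+1 j = (fair_binom_shift x m j + fair_binom_shift (~~ x) m j) / 2.
Proof.
suff pascal : fair_binom m.+1 j =
    (fair_binom_shift true m j + fair_binom_shift false m j) / 2.
  by case: x; rewrite // addrC.
have h2 : (2 ^+ m : R) != 0 by rewrite expf_neq0 // pnatr_eq0.
rewrite fair_binom_shift_true fair_binom_shift_false /fair_binom exprS.
by case: j => [|j]; rewrite ?bin0 ?binS ?natrD; field.
Qed.

Lemma sum_fair_binom_shift (x : bool) m (f : nat -> R) :
  \sum_(b < m.+1) fair_binom m b * f (x + b)%N =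
  \sum_(j < m.+2) fair_binom_shift x m j * f j.
Proof.
case: x.
  rewrite [RHS]big_ord_recl fair_binom_shift_true mul0r add0r.
  by apply: eq_bigr => b _; rewrite fair_binom_shift_true.
rewrite [RHS]big_ord_recr /= fair_binom_shift_false fair_binom_small // mul0r addr0.
by apply: eq_bigr => b _; rewrite fair_binom_shift_false.
Qed.

Lemma fair_binom_shift_rev x m (j : 'I_m.+2) :
  fair_binom_shift x m (rev_ord j) = fair_binom_shift (~~ x) m j.
Proof.
suff rev_false (k : 'I_m.+2) :
    fair_binom_shift false m (rev_ord k) = fair_binom_shift true m k.
  by case: x; rewrite // -[in RHS](rev_ordK j) rev_false.
rewrite fair_binom_shift_false fair_binom_shift_true /= subSS.
case: k => -[|k] /= lt_k; first by rewrite subn0 fair_binom_small.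
by rewrite /fair_binom subSS bin_sub.
Qed.

Lemma sum_fair_binom_expR m (t : R) :
  \sum_(i < m.+1) fair_binom m i * expR (t * i%:R) = ((1 + expR t) / 2) ^+ m.
Proof.
rewrite expr_div_n addrC exprD1n mulr_suml; apply: eq_bigr => i _.
by rewrite /fair_binom expRM_natr -[in RHS]mulr_natl mulrAC.
Qed.

Lemma fair_binom_chernoff m (t a : R) (P : pred 'I_m.+1) :
  (forall i, P i -> a <= t * i%:R) ->
  \sum_(i < m.+1 | P i) fair_binom m i <= expR (- a) * ((1 + expR t) / 2) ^+ m.
Proof.
move=> Pa; rewrite -sum_fair_binom_expR mulr_sumr.
apply: (@le_trans _ _
  (\sum_(i < m.+1 | P i) expR (- a) * (fair_binom m i * expR (t * i%:R)))).
  apply: ler_sum => i /Pa le_a; rewrite mulrCA -expRD -[leLHS]mulr1.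
  rewrite ler_wpM2l ?fair_binom_ge0 //.
  by apply: le_trans (expR_ge1Dx _); rewrite lerDl addrC subr_ge0.
rewrite [leRHS](bigID P) /= lerDl; apply: sumr_ge0 => i _.
by rewrite mulr_ge0 ?expR_ge0 // mulr_ge0 ?expR_ge0 // fair_binom_ge0.
Qed.

Lemma fair_binom_ratio_lt m (i : 'I_m.+1) (rho : R) :
  rho * fair_binom m i.+1 < fair_binom m i -> rho * (m%:R - i%:R) < i.+1%:R.
Proof.
have C_gt0 : (0 : R) < 'C(m, i)%:R by rewrite ltr0n bin_gt0 -ltnS.
have rec : i.+1%:R * 'C(m, i.+1)%:R = (m%:R - i%:R) * 'C(m, i)%:R :> R.
  by rewrite -natrB -1?ltnS // -!natrM mul_bin_left.
rewrite /fair_binom mulrA ltr_pM2r ?invr_gt0 ?exprn_gt0 // => lt_rho.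
by rewrite -(ltr_pM2r C_gt0) -mulrA -rec mulrCA ltr_pM2l ?ltr0n.
Qed.

Lemma fair_binom_shift_tail (x : bool) m (rho th : R) : 0 <= rho -> 0 <= th ->
  \sum_(j < m.+2) (if rho * fair_binom_shift (~~ x) m j < fair_binom_shift x m j
                   then fair_binom_shift x m j else 0)
  <= expR th * ((expR th + expR (- (rho * th))) / 2) ^+ m.
Proof.
move=> rho0 th0.
suff tail_true : \sum_(j < m.+2)
      (if rho * fair_binom_shift false m j < fair_binom_shift true m j
       then fair_binom_shift true m j else 0)
    <= expR th * ((expR th + expR (- (rho * th))) / 2) ^+ m.
  case: x => //=; rewrite (reindex_inj rev_ord_inj) /=.
  by under eq_bigr => j _ do rewrite !fair_binom_shift_rev /=.
rewrite big_ord_recl /= !fair_binom_shift_true if_same add0r.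
under eq_bigr => i _ do rewrite fair_binom_shift_true fair_binom_shift_false /=.
rewrite -big_mkcond /bump /=.
under eq_bigl => i do rewrite add1n add0n.
under eq_bigr => i _ do rewrite add0n.
have -> : expR th * ((expR th + expR (- (rho * th))) / 2) ^+ m
    = expR (- (th * (rho * m%:R - 1))) * ((1 + expR (th * (1 + rho))) / 2) ^+ m.
  rewrite (_ : - (th * _) = th + m%:R * - (rho * th)); last by ring.
  rewrite expRD expRM_natl -mulrA -exprMn mulrA mulrDr mulr1 -expRD.
  have -> : - (rho * th) + th * (1 + rho) = th by ring.
  by rewrite addrC.
apply: fair_binom_chernoff => i /fair_binom_ratio_lt lt_i.
by rewrite -natr1 in lt_i; rewrite -mulrA ler_wpM2l //; lra.
Qed.

Lemma pow_le_expR k (x : R) :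
  0 <= 1 + x / k.+1%:R -> (1 + x / k.+1%:R) ^+ k.+1 <= expR x.
Proof.
move=> ge0; rewrite -[X in expR X](@divfK _ k.+1%:R) ?pnatr_eq0 // expRM_natr.
by apply: lerXn2r; rewrite ?nnegrE ?expR_ge0 //; exact: expR_ge1Dx.
Qed.

Lemma expR_le_inv_pow k (x : R) :
  x < k.+1%:R -> expR x <= ((1 - x / k.+1%:R) ^+ k.+1)^-1.
Proof.
move=> lt_x; have pos : 0 < 1 - x / k.+1%:R.
  by rewrite subr_gt0 ltr_pdivrMr ?mul1r ?ltr0n.
rewrite -[expR x]invrK lef_pV2 ?posrE ?invr_gt0 ?expR_gt0 ?exprn_gt0 //.
by rewrite -expRN -mulNr pow_le_expR // mulNr ltW.
Qed.

(** * Mixtures of the two conditional laws *)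

Lemma mixture_ratio_le_expR (U V p E : R) :
  0 <= U -> 0 <= V -> 0 <= p <= 1 -> 0 <= E -> U <= (1 + E / 2) ^+ 2 * V ->
  (1 - p) * U + p * ((U + V) / 2)
  <= expR ((1 - p) * E) * ((1 - p) * V + p * ((U + V) / 2)).
Proof.
move=> U0 V0 /andP[p0 p1] E0 le_U.
set A := (1 - p) * U + _; set B := (1 - p) * V + _.
set s := (1 + E / 2) ^+ 2 - 1.
have s0 : 0 <= s by rewrite /s; nra.
have B0 : 0 <= B by rewrite /B; nra.
(* A/B increases with U/V; [lin] is its value at U = (1 + s) V. *)
have lin : (1 + p * s / 2) * A <= (1 + (2 - p) * s / 2) * B.
  have gap : (1 + (2 - p) * s / 2) * B - (1 + p * s / 2) * A
      = (1 - p) * ((1 + s) * V - U) by rewrite /A /B; field.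
  by rewrite -subr_ge0 gap mulr_ge0 ?subr_ge0 // /s addrCA subrr addr0.
have poly : 1 + (2 - p) * s / 2 <= (1 + (1 - p) * E / 2) ^+ 2 * (1 + p * s / 2).
  have gap : (1 + (1 - p) * E / 2) ^+ 2 * (1 + p * s / 2) - (1 + (2 - p) * s / 2)
      = (1 - p) * p * (E ^+ 2 / 4 + E ^+ 3 / 8 + E ^+ 2 * s * (1 - p) / 8).
    by rewrite /s; field.
  rewrite -subr_ge0 gap mulr_ge0 ?mulr_ge0 ?subr_ge0 //.
  have : 0 <= E ^+ 2 * s * (1 - p).
    by apply: mulr_ge0; [exact: mulr_ge0 (sqr_ge0 E) s0 | lra].
  have := sqr_ge0 E; have := exprn_ge0 3 E0; lra.
have sq : (1 + (1 - p) * E / 2) ^+ 2 <= expR ((1 - p) * E).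
  by apply: pow_le_expR; nra.
have le_A : A <= (1 + (1 - p) * E / 2) ^+ 2 * B.
  have pos : 0 < 1 + p * s / 2 by have := mulr_ge0 p0 s0; lra.
  rewrite -(ler_pM2l pos); apply: le_trans lin _.
  rewrite [leRHS]mulrCA mulrA; exact: ler_wpM2r.
apply: le_trans le_A _; exact: ler_wpM2r.
Qed.

Lemma mixture_privacy_loss (U V I p eps E : R) :
  0 <= U -> 0 <= V -> 0 <= I <= 1 -> 0 <= p <= 1 -> 0 <= E -> (1 - p) * E <= eps ->
  I * ((1 - p) * U + p * ((U + V) / 2))
    - expR eps * (I * ((1 - p) * V + p * ((U + V) / 2)))
  <= (if (1 + E / 2) ^+ 2 * V < U then U else 0).
Proof.
move=> U0 V0 /andP[I0 I1] p01 E0 le_eps; have /andP[p0 p1] := p01.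
have B0 : 0 <= (1 - p) * V + p * ((U + V) / 2) by nra.
case: ifPn => [lt_U | ].
  have le_VU : V <= U by have := sqr_ge0 E; nra.
  have le_AU : (1 - p) * U + p * ((U + V) / 2) <= U by nra.
  have := mulr_ge0 (expR_ge0 eps) (mulr_ge0 I0 B0); nra.
rewrite -leNgt => le_U; rewrite subr_le0 [leRHS]mulrCA; apply: (ler_wpM2l I0).
apply: le_trans (mixture_ratio_le_expR U0 V0 p01 E0 le_U) _.
by apply: (ler_wpM2r B0); rewrite ler_expR.
Qed.

Definition chernoff_factor (E th : R) : R :=
  (expR th + expR (- ((1 + E / 2) ^+ 2 * th))) / 2.

Lemma pair_privacy_loss (f : nat -> R) (x : bool) m (p eps E th : R) :
  (forall j, 0 <= f j <= 1) -> 0 <= p <= 1 -> 0 <= E -> (1 - p) * E <= eps ->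
  0 <= th ->
  \sum_(j < m.+2) f j * ((1 - p) * fair_binom_shift x m j + p * fair_binom m.+1 j)
    - expR eps * \sum_(j < m.+2)
        f j * ((1 - p) * fair_binom_shift (~~ x) m j + p * fair_binom m.+1 j)
  <= expR th * chernoff_factor E th ^+ m.
Proof.
move=> f01 p01 E0 le_eps th0.
apply: le_trans (fair_binom_shift_tail x m (sqr_ge0 (1 + E / 2)) th0).
rewrite mulr_sumr -sumrB; apply: ler_sum => j _; rewrite (fair_binomS x).
by apply: mixture_privacy_loss; rewrite ?fair_binom_shift_ge0.
Qed.

Lemma chernoff_factor0 (E : R) : chernoff_factor E 0 = 1.
Proof. by rewrite /chernoff_factor mulr0 oppr0 expR0; field. Qed.

Lemma chernoff_factor_le_small (E : R) :
  0 <= E <= 3 / 10 -> chernoff_factor E (E / 4) <= 1 - E ^+ 2 / 32.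
Proof.
move=> /andP[E0 E1]; rewrite /chernoff_factor.
set u := (1 + E / 2) ^+ 2 * (E / 4).
have u0 : 0 <= u by rewrite /u mulr_ge0 ?sqr_ge0 //; lra.
have h1 : expR (E / 4) <= 1 + E / 4 + 11 / 10 * (E / 4) ^+ 2.
  have lt1 : E / 4 < 1%:R by lra.
  apply: le_trans (expR_le_inv_pow lt1) _.
  rewrite expr1 -div1r ler_pdivrMr; last lra.
  nra.
have h2 : expR (- u) <= 1 - u + u ^+ 2.
  rewrite expRN -div1r ler_pdivrMr ?expR_gt0 //.
  have : 0 <= 1 - u + u ^+ 2 by nra.
  have := expR_ge1Dx u; nra.
have u2 : u ^+ 2 <= (19 / 10 + E) * E ^+ 2 / 16.
  rewrite (_ : u ^+ 2 = (1 + E / 2) ^+ 4 * E ^+ 2 / 16); last by rewrite /u; field.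
  have h4 : (1 + E / 2) ^+ 4 <= 19 / 10 + E by nra.
  by rewrite ler_pM2r ?invr_gt0 //; apply: ler_wpM2r => //; exact: sqr_ge0.
have ue : u = E / 4 + E ^+ 2 / 4 + E ^+ 3 / 16 by rewrite /u; field.
lra.
Qed.

(* [c1] and [c2] certify [expR th <= c1] and [expR (- rho th) <= c2] through
   e^x <= (1 - x/8)^-8 and e^-x <= (1 + x/8)^-8; the table of certificates in
   [exists_chernoff_factor_le] was computed numerically. *)
Lemma chernoff_factor_le_certified (E a b th c1 c2 : R) :
  0 <= a <= E -> E <= b -> 0 <= th < 8 ->
  1 <= c1 * (1 - th / 8) ^+ 8 -> 1 <= c2 * (1 + (1 + a / 2) ^+ 2 * th / 8) ^+ 8 ->
  c1 + c2 <= 2 - b ^+ 2 / 16 -> chernoff_factor E th <= 1 - E ^+ 2 / 32.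
Proof.
move=> /andP[a0 aE] Eb /andP[th0 th8] c1_ge c2_ge c12.
have e1 : expR th <= c1.
  have pos : 0 < (1 - th / 8) ^+ 8 by apply: exprn_gt0; lra.
  by apply: le_trans (expR_le_inv_pow th8) _; rewrite -div1r ler_pdivrMr.
have e2 : expR (- ((1 + E / 2) ^+ 2 * th)) <= c2.
  set x := (1 + a / 2) ^+ 2 * th in c2_ge.
  have pos : 0 < (1 + x / 8) ^+ 8 by apply: exprn_gt0; rewrite /x; nra.
  have le_x : x <= (1 + E / 2) ^+ 2 * th.
    by apply: ler_wpM2r => //; apply: lerXn2r; rewrite ?nnegrE; lra.
  have c2_0 : 0 <= c2.
    by apply/ltW; rewrite -(pmulr_lgt0 _ pos); exact: lt_le_trans ltr01 c2_ge.
  apply: le_trans (_ : expR (- x) <= c2); first by rewrite ler_expR lerN2.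
  rewrite expRN -div1r ler_pdivrMr ?expR_gt0 //; apply: le_trans c2_ge _.
  by apply: ler_wpM2l => //; apply: pow_le_expR; rewrite /x; nra.
have : E ^+ 2 <= b ^+ 2 by nra.
rewrite /chernoff_factor; lra.
Qed.

Lemma exists_chernoff_factor_le (E : R) : 0 <= E <= 2 ->
  exists2 th, 0 <= th <= 1 / 4 & chernoff_factor E th <= 1 - E ^+ 2 / 32.
Proof.
move=> /andP[E0 E2].
have [E1|E1] := lerP E (3 / 10).
  by exists (E / 4); [lra | apply: chernoff_factor_le_small; lra].
have [E3|E3] := lerP E (1 / 2).
  exists (2 / 25); first lra.
  by apply: (@chernoff_factor_le_certified _ (3 / 10) (1 / 2) _
    (5419 / 5000) (9003 / 10000)); lra.
have [E4|E4] := lerP E (4 / 5).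
  exists (3 / 25); first lra.
  by apply: (@chernoff_factor_le_certified _ (1 / 2) (4 / 5) _
    (5643 / 5000) (8309 / 10000)); lra.
have [E5|E5] := lerP E (6 / 5).
  exists (17 / 100); first lra.
  by apply: (@chernoff_factor_le_certified _ (4 / 5) (6 / 5) _
    (19 / 16) (1443 / 2000)); lra.
have [E6|E6] := lerP E (33 / 20).
  exists (23 / 100); first lra.
  by apply: (@chernoff_factor_le_certified _ (6 / 5) (33 / 20) _
    (12629 / 10000) (2833 / 5000)); lra.
exists (21 / 100); first lra.
by apply: (@chernoff_factor_le_certified _ (33 / 20) 2 _
  (3093 / 2500) (1023 / 2000)); lra.
Qed.

(** * Conditioning the mechanism on the noise set *)

Definition indic n (W : {set 'I_n.+1}) (v : nat) : R := \sum_(k in W) (v == k)%:R.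

Lemma indic_ge0_le1 n (W : {set 'I_n.+1}) v : 0 <= indic W v <= 1.
Proof.
rewrite sumr_ge0 => [|k _]; last by rewrite ler0n.
apply: (@le_trans _ _ (\sum_(k < n.+1) (v == k)%:R)).
  by rewrite [leRHS](bigID (mem W)) /= lerDl sumr_ge0 // => k _; rewrite ler0n.
have [lt_vn|le_nv] := ltnP v n.+1.
  rewrite (bigD1 (Ordinal lt_vn)) //= eqxx big1 ?addr0 // => k neq.
  by case: eqP => // eq_v; case/eqP: neq; exact: val_inj.
rewrite big1 // => k _; case: eqP => // eq_v.
by move: (ltn_ord k); rewrite -eq_v ltnNge le_nv.
Qed.

(* Pr[C_lambda(X) \in W | H] *)
Definition cond_mass n (W : {set 'I_n.+1}) (X : {ffun 'I_n -> bool})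
    (H : {set 'I_n}) : R :=
  \sum_(b < #|H|.+1) fair_binom #|H| b * indic W (ones_off X H + b).

Lemma big_set_by_card (T : finType) m (P : pred {set T}) (F : {set T} -> R) :
  (forall H, P H -> #|H| <= m)%N ->
  \sum_(H | P H) F H = \sum_(s < m.+1) \sum_(H | P H && (#|H| == s)) F H.
Proof.
move=> le_m.
rewrite (partition_big (fun H : {set T} => inord #|H| : 'I_m.+1) xpredT) //.
apply: eq_bigr => s _; apply: eq_bigl => H; case PH: (P H) => //=.
by rewrite -(inj_eq val_inj) /= inordK // ltnS le_m.
Qed.

Lemma C_lambda_pmfE n (lam : R) X k :
  C_lambda_pmf lam X k = \sum_(H : {set 'I_n})
    (lam / n%:R) ^+ #|H| * (1 - lam / n%:R) ^+ (n - #|H|) *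
    \sum_(b < #|H|.+1) fair_binom #|H| b * ((ones_off X H + b == k)%N)%:R.
Proof.
rewrite (big_set_by_card (m := n) (P := xpredT)) => [|H _]; last first.
  by have := max_card H; rewrite card_ord.
apply: eq_bigr => s _; rewrite mulr_sumr; apply: eq_bigr => H /eqP <-.
have C_neq0 : ('C(n, #|H|)%:R : R) != 0.
  by rewrite pnatr_eq0 -lt0n bin_gt0; have := max_card H; rewrite card_ord.
rewrite /binom_pmf mulrA; congr (_ * _); first by field.
by apply: eq_bigr => b _; rewrite -binom_pmf_half.
Qed.

Lemma C_lambda_mass n (lam : R) X (W : {set 'I_n.+1}) :
  \sum_(k in W) C_lambda_pmf lam X k = \sum_(H : {set 'I_n})
    (lam / n%:R) ^+ #|H| * (1 - lam / n%:R) ^+ (n - #|H|) * cond_mass W X H.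
Proof.
under eq_bigr do rewrite C_lambda_pmfE.
rewrite exchange_big /=; apply: eq_bigr => H _; rewrite -mulr_sumr /cond_mass.
rewrite exchange_big /=; congr (_ * _); apply: eq_bigr => b _.
by rewrite mulr_sumr.
Qed.

Lemma sum_set_pairs_setU1 (T : finType) (i : T) (F : {set T} -> R) :
  \sum_(H : {set T}) F H = \sum_(H : {set T} | i \notin H) (F H + F (i |: H)).
Proof.
rewrite big_split /= [LHS](bigID (fun H : {set T} => i \in H)) /= addrC.
congr (_ + _).
rewrite (reindex_onto (fun H : {set T} => i |: H) (fun H => H :\ i)) /=; last first.
  by move=> H iH; rewrite setD1K.
apply: eq_bigl => H; rewrite setU11 /=.
by apply/eqP/idP => [<-|iH]; [rewrite setD11 | rewrite setU1K].
Qed.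

Lemma sum_subsets_binomial (T : finType) (B : {set T}) (x y : R) :
  \sum_(H : {set T} | H \subset B) x ^+ #|H| * y ^+ (#|B| - #|H|) = (x + y) ^+ #|B|.
Proof.
rewrite (big_set_by_card (m := #|B|)) => [|H]; last exact: subset_leq_card.
rewrite addrC exprDn; apply: eq_bigr => s _.
rewrite (eq_bigr (fun _ => y ^+ (#|B| - s) * x ^+ s)); last first.
  by move=> H /andP[_ /eqP ->]; rewrite mulrC.
by rewrite sumr_const -cards_draws; congr (_ *+ _); apply: eq_card => H; rewrite inE.
Qed.

Lemma sum_notin_binomial N (i : 'I_N.+1) (x y : R) :
  \sum_(H : {set 'I_N.+1} | i \notin H) x ^+ #|H| * y ^+ (N - #|H|) = (x + y) ^+ N.
Proof.
have := sum_subsets_binomial [set~ i] x y; rewrite cardsC1 card_ord => <-.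
by apply: eq_bigl => H; rewrite subsetC sub1set inE.
Qed.

(* Pairing H with i |: H conditions on the noise set outside i: with probability
   1 - p, i is not noised and the output is A + Y i + Bin(m, 1/2); otherwise it
   is A + Bin(m + 1, 1/2). *)
Lemma cond_mass_pair N (p : R) (Y : {ffun 'I_N.+1 -> bool}) (i : 'I_N.+1)
    (W : {set 'I_N.+2}) (H : {set 'I_N.+1}) : i \notin H ->
  p ^+ #|H| * (1 - p) ^+ (N.+1 - #|H|) * cond_mass W Y H
    + p ^+ #|i |: H| * (1 - p) ^+ (N.+1 - #|i |: H|) * cond_mass W Y (i |: H)
  = p ^+ #|H| * (1 - p) ^+ (N - #|H|) *
    \sum_(j < #|H|.+2) indic W (ones_off Y (i |: H) + j) *
      ((1 - p) * fair_binom_shift (Y i) #|H| j + p * fair_binom #|H|.+1 j).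
Proof.
move=> iH; have le_HN : (#|H| <= N)%N.
  have : (#|H| <= #|[set~ i]|)%N by rewrite subset_leq_card // subsetC sub1set inE.
  by rewrite cardsC1 card_ord.
rewrite /cond_mass cardsU1 iH add1n subSS subSn // !exprS (ones_off_setU1 Y iH).
under eq_bigr do rewrite -addnA.
rewrite (sum_fair_binom_shift _ _ (fun v => indic W (ones_off Y (i |: H) + v))).
rewrite !mulr_sumr -big_split; apply: eq_bigr => j _ /=; ring.
Qed.

Lemma C_lambda_neighbour_loss N (lam eps E th : R) (X X' : {ffun 'I_N.+1 -> bool})
    (i : 'I_N.+1) (W : {set 'I_N.+2}) :
  0 <= lam / N.+1%:R <= 1 -> (forall j, j != i -> X j = X' j) -> X' i = ~~ X i ->
  0 <= E -> (1 - lam / N.+1%:R) * E <= eps -> 0 <= th ->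
  \sum_(k in W) C_lambda_pmf lam X k - expR eps * \sum_(k in W) C_lambda_pmf lam X' k
  <= expR th * (lam / N.+1%:R * chernoff_factor E th + (1 - lam / N.+1%:R)) ^+ N.
Proof.
move=> p01 agree flip E0 le_eps th0; set p := lam / N.+1%:R in p01 le_eps *.
rewrite !C_lambda_mass -/p !(sum_set_pairs_setU1 i) mulr_sumr -sumrB; clearbody p.
rewrite -(sum_notin_binomial i) mulr_sumr; apply: ler_sum => H iH.
rewrite !cond_mass_pair // -(ones_off_eq _ agree) flip [X in _ - X]mulrCA -mulrBr.
rewrite [leRHS](_ : _ = p ^+ #|H| * (1 - p) ^+ (N - #|H|) *
    (expR th * chernoff_factor E th ^+ #|H|)); last by rewrite exprMn; ring.
apply: ler_wpM2l.
  by have /andP[p0 p1] := p01; rewrite mulr_ge0 ?exprn_ge0 ?subr_ge0.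
apply: (pair_privacy_loss (f := fun j => indic W (_ + j))) => // j.
exact: indic_ge0_le1.
Qed.

(** * Choice of the parameters *)

Lemma chernoff_average_le N (lam delta E th : R) :
  0 <= lam / N.+1%:R <= 1 -> 0 < delta -> 0 <= th <= 1 / 4 ->
  chernoff_factor E th <= 1 - E ^+ 2 / 32 -> 32 * ln (4 / delta) <= lam * E ^+ 2 ->
  expR th * (lam / N.+1%:R * chernoff_factor E th + (1 - lam / N.+1%:R)) ^+ N
  <= delta.
Proof.
move=> /andP[p0 p1] d0 /andP[th0 th1] le_c le_lam.
have Np : N%:R * (lam / N.+1%:R) = lam - lam / N.+1%:R.
  by rewrite -natr1; field; rewrite natr1 pnatr_eq0.
set p := lam / N.+1%:R in p0 p1 Np *; set c := chernoff_factor E th in le_c *.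
have c0 : 0 <= c by rewrite /c /chernoff_factor divr_ge0 ?addr_ge0 ?expR_ge0.
clearbody p c.
have lam0 : 0 <= lam by have := mulr_ge0 (ler0n R N) p0; lra.
have le_pow : (p * c + (1 - p)) ^+ N <= expR ((lam - p) * (c - 1)).
  rewrite -Np -mulrA expRM_natl; apply: lerXn2r; rewrite ?nnegrE ?expR_ge0 //.
    by have := mulr_ge0 p0 c0; lra.
  by apply: le_trans (expR_ge1Dx _); lra.
have le_exp : th + (lam - p) * (c - 1) <= 5 / 4 - ln (4 / delta).
  have E2 := sqr_ge0 E.
  have h1 : lam * (E ^+ 2 / 32) <= lam * (1 - c) by apply: ler_wpM2l; lra.
  have h2 : p * (1 - c) <= 1 * 1 by apply: ler_pM; lra.
  lra.
apply: le_trans (_ : expR th * expR ((lam - p) * (c - 1)) <= _).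
  by rewrite ler_pM2l ?expR_gt0.
rewrite -expRD; apply: le_trans (_ : expR (5 / 4 - ln (4 / delta)) <= _).
  by rewrite ler_expR.
rewrite expRD expRN lnK ?posrE ?divr_gt0 // invf_div.
have e54 : expR (5 / 4 : R) <= 4.
  apply: le_trans (expR_le_inv_pow (k := 7) _) _; first lra.
  rewrite -div1r ler_pdivrMr; [lra | apply: exprn_gt0; lra].
nra.
Qed.

Lemma noise_gap_ge (lam delta : R) : 0 < delta < 1 -> 14 * ln (4 / delta) <= lam ->
  8 * ln (4 / delta) <= lam - Num.sqrt (2 * lam * ln (2 / delta)).
Proof.
move=> /andP[d0 d1] le_lam; set L := ln (4 / delta) in le_lam *.
set L2 := ln (2 / delta).
have L0 : 0 < L by apply: ln_gt0; rewrite ltr_pdivlMr // mul1r; lra.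
have L20 : 0 <= L2 by apply: ln_ge0; rewrite ler_pdivlMr // mul1r; lra.
have L2L : L2 <= L.
  by rewrite ler_ln ?posrE ?divr_gt0 // ler_pM2r ?invr_gt0 //; lra.
have gap0 : 0 <= lam - 8 * L by lra.
suff : Num.sqrt (2 * lam * L2) <= lam - 8 * L by lra.
rewrite -(ger0_norm gap0) -sqrtr_sqr ler_sqrt; last exact: sqr_ge0.
have : 2 * lam * L2 <= 2 * lam * L by apply: ler_wpM2l; lra.
have : 0 <= (lam - 14 * L) * (lam - 4 * L) by apply: mulr_ge0; lra.
have := sqr_ge0 L; nra.
Qed.

Lemma noise_scale_bounds (lam m L : R) : 0 < L -> 8 * L <= m -> m <= lam ->
  Num.sqrt (32 * L / m) <= 2 /\ 32 * L <= lam * Num.sqrt (32 * L / m) ^+ 2.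
Proof.
move=> L0 le_m le_lam; have m0 : 0 < m by lra.
have q0 : 0 <= 32 * L / m by rewrite divr_ge0 //; lra.
have q4 : 32 * L / m <= 4 by rewrite ler_pdivrMr //; lra.
have := sqrtr_ge0 (32 * L / m); have := sqr_sqrtr q0.
set E := Num.sqrt _ => E2 E0; rewrite E2; split; first nra.
rewrite mulrCA ler_pMr; last lra.
by rewrite ler_pdivlMr // mul1r.
Qed.

End Privacy.

Theorem claim4p6 (R : realType) (n : nat) (lam delta : R) :
  0 < delta -> 0 <= lam -> lam <= n%:R -> 14 * ln (4 / delta) <= lam ->
  diff_private (@C_lambda_pmf R n lam)
    (Num.sqrt (32 * ln (4 / delta) /
               (lam - Num.sqrt (2 * lam * ln (2 / delta)))) *
     (1 - (lam - Num.sqrt (2 * lam * ln (2 / delta))) / n%:R))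
    delta.
Proof.
case: n => [|N] d0 lam0 lam_n lam_L X X' XX' W.
  by have := max_card [set i | X i != X' i]; rewrite card_ord XX'.
have [i agree flip] := neighbour_flip XX'.
have p01 : 0 <= lam / N.+1%:R <= 1 by rewrite divr_ge0 ?ler_pdivrMr ?mul1r ?ltr0n.
set m := lam - _; set E := Num.sqrt _.
have m_lam : m <= lam by rewrite /m lerBlDr lerDl sqrtr_ge0.
have le_eps : (1 - lam / N.+1%:R) * E <= E * (1 - m / N.+1%:R).
  rewrite mulrC; apply: ler_wpM2l; first exact: sqrtr_ge0.
  by rewrite lerD2l lerN2; apply: ler_wpM2r; rewrite ?invr_ge0.
rewrite -lerBlDl.
have [d1|d1] := lerP 1 delta.
  apply: le_trans (C_lambda_neighbour_loss W p01 agree flip _ le_eps (lexx 0)) _.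
    exact: sqrtr_ge0.
  by rewrite chernoff_factor0 expR0 mul1r mulr1 addrCA subrr addr0 expr1n.
have L0 : 0 < ln (4 / delta) by apply: ln_gt0; rewrite ltr_pdivlMr // mul1r; lra.
have m8 : 8 * ln (4 / delta) <= m by apply: noise_gap_ge; rewrite ?d0.
have [E2 lam_E] := noise_scale_bounds L0 m8 m_lam.
have E02 : 0 <= E <= 2 by rewrite sqrtr_ge0.
have [th /andP[th0 th1] le_c] := exists_chernoff_factor_le E02.
apply: le_trans (C_lambda_neighbour_loss W p01 agree flip _ le_eps th0) _.
  exact: sqrtr_ge0.
by apply: chernoff_average_le; rewrite ?th0.
Qed.
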